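(* Let $G$ be a partial cube and let $F_1$ and $F_2$ be $\Theta$-classes of $G$. Then $F_1 \cup F_2$ is an edge general position set of $G$.
   Context: Graphs are finite and connected. A graph $G$ is a partial cube if it is an isometric subgraph of some hypercube $Q_r$ (i.e., distances in $G$ equal distances in $Q_r$). The Djoković–Winkler relation $\Theta$ on the edges of $G$ is defined by: edges $xy$ and $uv$ are in relation $\Theta$ if $d_G(x,u) + d_G(y,v) \neq d_G(x,v) + d_G(y,u)$. In a partial cube, $\Theta$ is an equivalence relation, and its equivalence classes are called $\Theta$-classes. A set $S$ of edges of $G$ is an edge general position set if no geodesic (shortest path) of $G$ contains three edges of $S$. *)

(* Simple graphs as symmetric irreflexive relations on a finType. *)
From mathcomp Require Import all_boot.
Set Implicit Arguments. Unset Strict Implicit. Unset Printing Implicit Defensive.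

Section Graphs.
Variable T : finType.
Variable e : rel T.

Definition walkb (n : nat) (x y : T) : bool :=
  [exists p : n.-tuple T, path e x p && (last x p == y)].

(* graph distance: the least n (< #|T|) admitting a walk of length n from x to y;
   in a connected graph this is the usual shortest-path distance *)
Definition dist (x y : T) : nat := find (fun n => walkb n x y) (iota 0 #|T|).

Definition geodesic (x : T) (p : seq T) : bool :=
  path e x p && (size p == dist x (last x p)).

Definition walk_edges (x : T) (p : seq T) : {set {set T}} :=
  [set E in pairmap (fun a b => [set a; b]) x p].

Definition edge_gp_set (S : {set {set T}}) : Prop :=
  forall x p, geodesic x p -> #|S :&: walk_edges x p| < 3.

Definition theta (x y u v : T) : bool :=
  dist x u + dist y v != dist x v + dist y u.

Definition theta_class (x y : T) : {set {set T}} :=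
  [set E | [exists u, exists v, [&& e u v, E == [set u; v] & theta x y u v]]].

Definition connected_graph : Prop := forall x y, connect e x y.
End Graphs.

Definition hypercube_rel (r : nat) : rel {ffun 'I_r -> bool} :=
  fun f g => #|[set i | f i != g i]| == 1.

Definition partial_cube (T : finType) (e : rel T) : Prop :=
  exists r (phi : T -> {ffun 'I_r -> bool}),
    forall x y, dist e x y = dist (@hypercube_rel r) (phi x) (phi y).

From mathcomp Require Import all_boot.
Set Implicit Arguments. Unset Strict Implicit. Unset Printing Implicit Defensive.

(* Distances in the hypercube Q_r are Hamming distances, so an isometric
   embedding phi of G sends each edge ab to a pair of words differing in a single
   coordinate, and a geodesic of G to a walk of Q_r whose steps flip pairwise
   distinct coordinates (otherwise its Hamming length would be smaller than its
   length).  An edge uv flipping a coordinate different from the one flipped by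
   xy satisfies d(x,u) + d(y,v) = d(x,v) + d(y,u), so all edges of the
   Theta-class of xy flip the same coordinate.  Hence a geodesic meets the union
   of two Theta-classes in at most two edges. *)

Section GraphDistance.
Variables (T : finType) (e : rel T).

Lemma dist_least_walk x y n :
  walkb e n x y -> n < #|T| -> (forall m, m < n -> ~~ walkb e m x y) ->
  dist e x y = n.
Proof.
move=> walk_n n_lt least; rewrite /dist.
have has_walk : has (fun m => walkb e m x y) (iota 0 #|T|).
  by apply/hasP; exists n => //; rewrite mem_iota.
set k := find _ _.
have k_lt : k < #|T| by rewrite -(size_iota 0 #|T|) -has_find.
case: (ltngtP k n) => // [k_lt_n | n_lt_k].
- have := nth_find 0 has_walk; rewrite -/k nth_iota // add0n.
  by rewrite (negbTE (least _ k_lt_n)).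
- by have := before_find 0 n_lt_k; rewrite nth_iota // add0n walk_n.
Qed.

Lemma dist_edge a b : irreflexive e -> e a b -> dist e a b = 1.
Proof.
move=> eirr eab; have ab : a != b by apply: contraTneq eab => ->; rewrite eirr.
apply: dist_least_walk.
- by apply/existsP; exists [tuple b]; rewrite /= eab eqxx.
- by apply: leq_trans (max_card [set a; b]); rewrite cards2 ab.
- case=> // _; apply/negP => /existsP[t].
  by rewrite (tuple0 t) /= (negbTE ab).
Qed.

End GraphDistance.

Lemma card_bigcup_le_undup (A : finType) (s : seq {set A}) :
  {in s, forall D : {set A}, #|D| <= 1} -> #|\bigcup_(D <- s) D| <= size (undup s).
Proof.
rewrite -big_undup; last exact: setUid.
move=> le1; have {le1} : {in undup s, forall D : {set A}, #|D| <= 1}.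
  by move=> D; rewrite mem_undup; apply: le1.
elim: (undup s) => [|D t IH] le1; first by rewrite big_nil cards0.
rewrite big_cons cardsU; apply: leq_trans (leq_subr _ _) _.
rewrite /= -add1n leq_add ?le1 ?mem_head // IH // => D' D't.
by rewrite le1 // inE D't orbT.
Qed.

Section Hamming.
Variable r : nat.
Implicit Types f g h : {ffun 'I_r -> bool}.

Definition diffs f g : {set 'I_r} := [set k | f k != g k].
Definition hamming f g := #|diffs f g|.

Lemma diffs_sub_setU f g h : diffs f h \subset diffs f g :|: diffs g h.
Proof. by apply/subsetP => k; rewrite !inE; case: (f k); case: (g k); case: (h k). Qed.

Lemma hamming_sum f g : hamming f g = \sum_k (f k != g k).
Proof. by rewrite /hamming -sum1_card big_mkcond; apply: eq_bigr => k _; rewrite inE. Qed.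

Lemma hamming_add_swap f1 g1 f2 g2 :
  [disjoint diffs f1 g1 & diffs f2 g2] ->
  hamming f1 f2 + hamming g1 g2 = hamming f1 g2 + hamming g1 f2.
Proof.
move=> dis; rewrite !hamming_sum -!big_split; apply: eq_bigr => k _.
have : ~~ ((k \in diffs f1 g1) && (k \in diffs f2 g2)).
  by apply/andP => -[/(disjointFr dis) ->].
by rewrite !inE; case: (f1 k); case: (g1 k); case: (f2 k); case: (g2 k).
Qed.

Section Walks.
Variables (T : Type) (e : rel T) (phi : T -> {ffun 'I_r -> bool}).
Hypothesis edge_flips_one : forall a b, e a b -> hamming (phi a) (phi b) = 1.

Definition step_diffs x p := pairmap (fun a b => diffs (phi a) (phi b)) x p.

Lemma diffs_last_sub_bigcup x p :
  diffs (phi x) (phi (last x p)) \subset \bigcup_(D <- step_diffs x p) D.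
Proof.
elim: p x => [|y p IH] x /=.
  by apply/subsetP => k; rewrite inE eqxx.
rewrite big_cons; apply: subset_trans (diffs_sub_setU _ (phi y) _) _.
exact: setUS.
Qed.

Lemma step_diffs_card x p :
  path e x p -> {in step_diffs x p, forall D : {set 'I_r}, #|D| = 1}.
Proof.
elim: p x => [|y p IH] x //= /andP[exy pth] D; rewrite inE => /orP[/eqP ->|].
  exact: edge_flips_one.
exact: IH.
Qed.

Lemma hamming_walk_le_undup x p :
  path e x p -> hamming (phi x) (phi (last x p)) <= size (undup (step_diffs x p)).
Proof.
move=> pth; apply: leq_trans (subset_leq_card (diffs_last_sub_bigcup x p)) _.
by apply: card_bigcup_le_undup => D /(step_diffs_card pth) ->.
Qed.

Lemma hamming_walk_le x p : path e x p -> hamming (phi x) (phi (last x p)) <= size p.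
Proof.
move/hamming_walk_le_undup/leq_trans; apply.
by rewrite -(size_pairmap (fun a b => diffs (phi a) (phi b)) x) size_undup.
Qed.

Lemma uniq_step_diffs x p :
  path e x p -> hamming (phi x) (phi (last x p)) = size p -> uniq (step_diffs x p).
Proof.
move=> /hamming_walk_le_undup + eq_size; rewrite eq_size => le_undup.
by rewrite -[uniq _]negbK -ltn_size_undup size_pairmap -leqNgt.
Qed.

End Walks.

Lemma walkb_hamming n f g : hamming f g = n -> walkb (@hypercube_rel r) n f g.
Proof.
elim: n f g => [|n IH] f g hfg.
  apply/existsP; exists [tuple]; rewrite /=; apply/eqP/ffunP => k.
  apply/eqP; apply: contraT => fgk.
  have : k \in diffs f g by rewrite inE.
  by rewrite (cards0_eq hfg) inE.
have [k k_diff] : exists k, k \in diffs f g by apply/card_gt0P; rewrite [#|_|]hfg.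
pose f' := [ffun i => if i == k then ~~ f i else f i].
have diffs_ff' : diffs f f' = [set k].
  by apply/setP => i; rewrite !inE ffunE; case: (i =P k) => _; case: (f i).
have diffs_f'g : diffs f' g = diffs f g :\ k.
  apply/setP => i; rewrite !inE ffunE; case: (i =P k) => [->|] //=.
  by move: k_diff; rewrite inE; case: (f k); case: (g k).
have : hamming f' g = n.
  by move: hfg; rewrite /hamming diffs_f'g (cardsD1 k (diffs f g)) k_diff => -[].
case/IH/existsP => t /andP[pth last_t].
apply/existsP; exists (cons_tuple f' t) => /=.
by rewrite pth last_t andbT /hypercube_rel -/(diffs f f') diffs_ff' cards1.
Qed.

Lemma dist_hypercube f g : dist (@hypercube_rel r) f g = hamming f g.
Proof.
apply: dist_least_walk; first exact: walkb_hamming.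
  rewrite card_ffun card_bool card_ord.
  apply: leq_ltn_trans (ltn_expl r (isT : 1 < 2)).
  by rewrite -[X in _ <= X](card_ord r) max_card.
move=> m m_lt; apply/existsP => -[t /andP[pth /eqP last_t]].
have := @hamming_walk_le _ (@hypercube_rel r) id (fun a b => eqP) f t pth.
by rewrite last_t size_tuple leqNgt m_lt.
Qed.

End Hamming.

Lemma uniq_map_inj_in (A B : eqType) (f : A -> B) (s : seq A) :
  uniq (map f s) -> {in s &, injective f}.
Proof.
elim: s => [|a s IH] //= /andP[fa_notin uniq_fs] u v; rewrite !inE.
case/orP => [/eqP ->|us]; case/orP => [/eqP ->|vs] // fuv.
- by move: fa_notin; rewrite fuv map_f.
- by move: fa_notin; rewrite -fuv map_f.
- exact: IH.
Qed.

Section PartialCube.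
Variables (T : finType) (e : rel T) (r : nat) (phi : T -> {ffun 'I_r -> bool}).
Hypothesis eirr : irreflexive e.
Hypothesis phi_isometry :
  forall x y, dist e x y = dist (@hypercube_rel r) (phi x) (phi y).

Lemma dist_hamming x y : dist e x y = hamming (phi x) (phi y).
Proof. by rewrite phi_isometry dist_hypercube. Qed.

Lemma hamming_edge a b : e a b -> hamming (phi a) (phi b) = 1.
Proof. by move=> eab; rewrite -dist_hamming dist_edge. Qed.

Definition edge_coords (E : {set T}) : {set 'I_r} :=
  [set k | [exists a in E, exists b in E, phi a k != phi b k]].

Lemma edge_coords_set2 a b : edge_coords [set a; b] = diffs (phi a) (phi b).
Proof.
apply/setP => k; rewrite !inE; apply/idP/idP.
- case/exists_inP => a' /set2P[] -> /exists_inP[b' /set2P[] -> neq] //;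
    by [rewrite eqxx in neq | rewrite eq_sym].
- move=> neq; apply/exists_inP; exists a; first by rewrite !inE eqxx.
  by apply/exists_inP; exists b; rewrite ?inE ?eqxx ?orbT.
Qed.

Lemma edge_coords_inj_geodesic x p :
  geodesic e x p -> {in walk_edges x p &, injective edge_coords}.
Proof.
case/andP => pth /eqP size_p E1 E2; rewrite !inE => E1p E2p.
apply: (uniq_map_inj_in _ E1p E2p).
have -> : map edge_coords (pairmap (fun a b => [set a; b]) x p) = step_diffs phi x p.
  by elim: p {pth size_p E1p E2p} x => [|y p IH] x //=; rewrite edge_coords_set2 IH.
by apply: (uniq_step_diffs hamming_edge pth); rewrite -dist_hamming.
Qed.

Lemma edge_coords_theta_class x y E :
  e x y -> E \in theta_class e x y -> edge_coords E = diffs (phi x) (phi y).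
Proof.
move=> exy; rewrite inE => /existsP[u /existsP[v /and3P[euv /eqP -> theta_uv]]].
rewrite edge_coords_set2; apply/eqP; apply: contraNT theta_uv => neq.
have /cards1P[kx diffs_xy] := introT eqP (hamming_edge exy).
have /cards1P[ku diffs_uv] := introT eqP (hamming_edge euv).
rewrite /theta !dist_hamming; apply/eqP/hamming_add_swap.
rewrite diffs_xy diffs_uv disjoints1 inE.
by apply: contra neq => /eqP kx_ku; rewrite diffs_xy diffs_uv kx_ku.
Qed.

End PartialCube.

Theorem lemma3p1 (T : finType) (e : rel T)
  (esym : symmetric e) (eirr : irreflexive e) (econn : connected_graph e)
  (hpc : partial_cube e)
  (x1 y1 x2 y2 : T) (h1 : e x1 y1) (h2 : e x2 y2) :
  edge_gp_set e (theta_class e x1 y1 :|: theta_class e x2 y2).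
Proof.
case: hpc => r [phi phi_isometry] x p geo.
set A := _ :&: _.
have inj : {in A &, injective (edge_coords phi)}.
  apply: sub_in2 (edge_coords_inj_geodesic eirr phi_isometry geo).
  by move=> E; rewrite inE => /andP[].
have sub : edge_coords phi @: A \subset
           [set diffs (phi x1) (phi y1); diffs (phi x2) (phi y2)].
  apply/subsetP => K /imsetP[E]; rewrite in_setI in_setU => /andP[/orP[] thE _] ->.
  - by rewrite (edge_coords_theta_class eirr phi_isometry h1 thE) set21.
  - by rewrite (edge_coords_theta_class eirr phi_isometry h2 thE) set22.
rewrite -(card_in_imset inj); apply: leq_ltn_trans (subset_leq_card sub) _.
by rewrite cards2 !ltnS leq_b1.
Qed.
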